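(* Let $d\ge2$, $\bm\alpha=(\alpha_1,\dots,\alpha_d)\in(0,1)^d$, and let $C^{\mathrm{MO}}_{\bm\alpha}(\bm u)=\left(\prod_{j=1}^d u_j^{1-\alpha_j}\right)\min_{1\le j\le d}\{u_j^{\alpha_j}\}$, $\bm u\in[0,1]^d$, be the Marshall--Olkin copula, with survival copula $\hat C^{\mathrm{MO}}_{\bm\alpha}$. Then: (i) $\hat C^{\mathrm{MO}}_{\bm\alpha}$ admits the tail copula $\Lambda(\bm x;\hat C^{\mathrm{MO}}_{\bm\alpha})=\min_{1\le j\le d}\{\alpha_jx_j\}$, $\bm x\in(0,\infty)^d$. (ii) $\lambda^\ast(\hat C^{\mathrm{MO}}_{\bm\alpha})=\prod_{j=1}^d\alpha_j^{1/d}$. (iii) The maximizer of $\bm b\mapsto\Lambda(\bm b;\hat C^{\mathrm{MO}}_{\bm\alpha})$ over $\mathcal B$ is unique and equals $\bm b^\ast=\left(\frac{\prod_{j=1}^d\alpha_j^{1/d}}{\alpha_1},\dots,\frac{\prod_{j=1}^d\alpha_j^{1/d}}{\alpha_d}\right)\in\mathcal B$.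
   Context: For a $d$-dimensional copula $C$ and $\bm U\sim C$, the survival copula $\hat C$ is the distribution function of $(1-U_1,\dots,1-U_d)$. The (lower) tail copula of a copula $C$ is $\Lambda(\bm x;C)=\lim_{t\downarrow0}C(t\bm x)/t$, $\bm x\in(0,\infty)^d$, when the limit exists. Let $\mathcal B=\{\bm b\in(0,\infty)^d:\prod_{j=1}^d b_j=1\}$ and define the maximal tail concordance measure $\lambda^\ast(C)=\sup_{\bm b\in\mathcal B}\Lambda(\bm b;C)$. *)

From HB Require Import structures.
From mathcomp Require Import all_boot all_order all_algebra.
From mathcomp Require Import all_classical all_reals all_analysis.
Set Implicit Arguments. Unset Strict Implicit. Unset Printing Implicit Defensive.
Import Order.TTheory GRing.Theory Num.Theory.
Import numFieldNormedType.Exports.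
Local Open Scope classical_set_scope.
Local Open Scope ring_scope.

Section Defs.
Variable R : realType.
Variable d : nat.

(* minimum of f over j in {0,..,d-1} (meaningful for d >= 1) *)
Definition minI (f : 'I_d -> R) : R :=
  \big[Num.min/head 0 [seq f j | j <- enum 'I_d]]_(j < d) f j.

Definition MO_copula (alpha u : 'I_d -> R) : R :=
  (\prod_(j < d) (u j `^ (1 - alpha j))) * minI (fun j => u j `^ alpha j).

Definition has_cdf (dT : measure_display) (T : measurableType dT)
  (P : probability T R) (U : 'I_d -> T -> R) (C : ('I_d -> R) -> R) : Prop :=
  (forall j, measurable_fun setT (U j)) /\
  forall u : 'I_d -> R, (forall j, 0 <= u j <= 1) ->
    P [set w | forall j, U j w <= u j] = (C u)%:E.

Definition survival_cdf (dT : measure_display) (T : measurableType dT)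
  (P : probability T R) (U : 'I_d -> T -> R) : ('I_d -> R) -> R :=
  fun u => fine (P [set w | forall j, 1 - U j w <= u j]).

Definition tail_copula (C : ('I_d -> R) -> R) (x : 'I_d -> R) : R :=
  lim ((fun t : R => C (fun j => t * x j) / t) @ 0^'+).

Definition has_tail_copula (C : ('I_d -> R) -> R) (L : ('I_d -> R) -> R) : Prop :=
  forall x : 'I_d -> R, (forall j, 0 < x j) ->
    (fun t : R => C (fun j => t * x j) / t) @ 0^'+ --> L x.

Definition Bset : set ('I_d -> R) :=
  [set b | (forall j, 0 < b j) /\ \prod_(j < d) b j = 1].

Definition lambda_star (C : ('I_d -> R) -> R) : R :=
  sup [set tail_copula C b | b in Bset].

End Defs.

From HB Require Import structures.
From mathcomp Require Import all_boot all_order all_algebra.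
From mathcomp Require Import all_classical all_reals all_analysis.
From mathcomp Require Import lra.
Import Order.TTheory GRing.Theory Num.Theory.
Import numFieldNormedType.Exports.
Local Open Scope classical_set_scope.
Local Open Scope ring_scope.
Set Implicit Arguments. Unset Strict Implicit. Unset Printing Implicit Defensive.

(* By inclusion-exclusion over the coordinates, the survival copula is
   [Chat u = \sum_A (-1)^#|A| C u^A], where [u^A] equals [1 - u] on [A] and [1]
   elsewhere; the ties [U_j = 1 - u_j] that separate [<] from [<=] are null
   because the margins of a copula are uniform.  For the Marshall-Olkin copula
   [C (u^A (t x)) = 1 + t l(A) + o(t)] with
   [l(A) = - \sum_(j in A) (1 - alpha_j) x_j - max_(j in A) alpha_j x_j].
   Alternating sums over subsets kill constants and additive set functions, so
   [Chat (t x) / t] tends to [\sum_A (-1)^#|A| l(A) = min_j alpha_j x_j] by the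
   maximum-minimum identity.  On [Bset], [(min_j alpha_j b_j)^d] is at most
   [\prod_j alpha_j b_j = \prod_j alpha_j], with equality iff all the
   [alpha_j b_j] coincide; this gives [lambda_star] and its unique maximiser. *)

Section minI.
Variables (R : realType) (d : nat).
Implicit Types (f : 'I_d -> R) (m : R).

Lemma minI_le f j : minI f <= f j.
Proof. exact: bigmin_le. Qed.

Lemma minI_attained f : (0 < d)%N -> exists j, minI f = f j.
Proof.
move=> d_gt0; rewrite /minI.
have [j0 ->] : exists j0, head 0 [seq f j | j <- enum 'I_d] = f j0.
  by case: d d_gt0 f => // n _ f; rewrite enum_ordSl; exists ord0.
apply: (big_ind (fun v => exists j, v = f j)); first by exists j0.
  by move=> _ _ [i ->] [k ->]; case: leP => _; [exists i | exists k].
by move=> i _; exists i.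
Qed.

Lemma minI_eq f m : (0 < d)%N -> (forall j, m <= f j) -> (exists j, f j = m) ->
  minI f = m.
Proof.
move=> d_gt0 lb [j fj]; apply/eqP; rewrite eq_le -{1}fj minI_le /=.
by have [k ->] := minI_attained f d_gt0.
Qed.

Lemma minI_gt0 f : (0 < d)%N -> (forall j, 0 < f j) -> 0 < minI f.
Proof. by move=> d_gt0 f_gt0; have [j ->] := minI_attained f d_gt0. Qed.

Lemma minI_affine f c t : (0 < d)%N -> 0 < t ->
  (minI f - c) / t = minI (fun j => (f j - c) / t).
Proof.
move=> d_gt0 t_gt0; apply/esym/minI_eq => //.
  by move=> j; rewrite ler_pM2r ?invr_gt0 // lerD2r minI_le.
by have [j ->] := minI_attained f d_gt0; exists j.
Qed.

Lemma expn_minI_le_prod f : (0 < d)%N -> (forall j, 0 <= f j) ->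
  minI f ^+ d <= \prod_(j < d) f j.
Proof.
move=> d_gt0 f_ge0; have [k fk] := minI_attained f d_gt0.
rewrite -[d in _ ^+ d]card_ord -prodr_const.
by apply: ler_prod => j _; rewrite minI_le fk f_ge0.
Qed.

Lemma minI_eq_of_prod_le f : (forall j, 0 < f j) ->
  \prod_(j < d) f j <= minI f ^+ d -> forall j, f j = minI f.
Proof.
move=> f_gt0 prod_le j; have d_gt0 : (0 < d)%N by apply: leq_ltn_trans (ltn_ord j).
have m_gt0 := minI_gt0 d_gt0 f_gt0.
apply/eqP; rewrite eq_le minI_le andbT leNgt; apply: contraTN prod_le => m_lt_fj.
rewrite -ltNge -[d in _ ^+ d]card_ord -prodr_const.
rewrite [ltRHS](bigD1 j) //= [ltLHS](bigD1 j) //=.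
apply: (@lt_le_trans _ _ (f j * \prod_(k < d | k != j) minI f)).
  by rewrite ltr_pM2r // prodr_gt0.
by rewrite ler_pM2l //; apply: ler_prod => k _; rewrite ltW ?minI_le.
Qed.

End minI.

Section signed_subset_sums.
Variables (R : pzRingType) (I : finType).
Implicit Types (S A : {set I}) (G : {set I} -> R).

Lemma sum_subsets_split (F : {set I} -> R) S k : k \in S ->
  \sum_(A : {set I} | A \subset S) F A =
  \sum_(A : {set I} | A \subset S :\ k) F A + \sum_(A : {set I} | A \subset S :\ k) F (k |: A).
Proof.
move=> kS; rewrite (bigID (fun A => k \in A)) /= addrC; congr (_ + _).
  by apply: eq_bigl => A; rewrite finset.subsetD1 andbC; case: (k \in A).
rewrite (reindex_onto (fun A => k |: A) (fun A => A :\ k)); last first.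
  by move=> A /andP[_ kA]; rewrite finset.setD1K.
apply: eq_bigl => A; rewrite finset.setU11 andbT finset.subUset finset.sub1set kS /=.
rewrite finset.subsetD1.
case kA: (k \in A); last by rewrite finset.setU1K ?kA // eqxx andbT.
by rewrite andbF; apply/negbTE/andP => -[_ /eqP AE]; move: kA; rewrite -AE finset.setD11.
Qed.

Lemma sum_subsets_sign_split G S k : k \in S ->
  \sum_(A : {set I} | A \subset S) (-1) ^+ #|A| * G A =
  \sum_(A : {set I} | A \subset S :\ k) (-1) ^+ #|A| * (G A - G (k |: A)).
Proof.
move=> kS; rewrite (sum_subsets_split _ kS) -big_split /=.
apply: eq_bigr => A; rewrite finset.subsetD1 => /andP[_ kA].
by rewrite finset.cardsU1 kA exprS mulrBr mulN1r mulNr.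
Qed.

Lemma sum_sign_split G k :
  \sum_(A : {set I}) (-1) ^+ #|A| * G A =
  \sum_(A : {set I} | A \subset [set: I] :\ k) (-1) ^+ #|A| * (G A - G (k |: A)).
Proof.
rewrite -(sum_subsets_sign_split _ (finset.in_setT k)).
by apply: eq_bigl => A; rewrite finset.subsetT.
Qed.

Lemma sum_sign_eq0 G k : (forall A, G (k |: A) = G A) ->
  \sum_(A : {set I}) (-1) ^+ #|A| * G A = 0.
Proof. by move=> Gk; rewrite (sum_sign_split _ k) big1 // => A _; rewrite Gk subrr mulr0. Qed.

End signed_subset_sums.

Section signed_subset_sums_on_ordinals.
Variables (R : realType) (d : nat).

Lemma sum_sign_additive_eq0 (a : 'I_d -> R) : (1 < d)%N ->
  \sum_(A : {set 'I_d}) (-1) ^+ #|A| * \sum_j (if j \in A then a j else 0) = 0.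
Proof.
move=> d_gt1; under eq_bigr do rewrite mulr_sumr.
rewrite exchange_big /=; apply: big1 => j _.
have [k kj] : exists k : 'I_d, k != j.
  have [->|ji] := eqVneq j (Ordinal d_gt1); last by exists (Ordinal d_gt1); rewrite eq_sym.
  by exists (Ordinal (ltnW d_gt1)); rewrite -val_eqE.
rewrite (@sum_sign_eq0 _ _ (fun A => if j \in A then a j else 0) k) // => A.
by rewrite finset.in_setU1 eq_sym (negbTE kj).
Qed.

(* The maximum-minimum identity: for nonempty [A] the summand is [- max_(j in A) y j]. *)
Lemma sum_sign_minI (y : 'I_d -> R) : (0 < d)%N -> (forall j, 0 < y j) ->
  \sum_(A : {set 'I_d}) (-1) ^+ #|A| * minI (fun j => if j \in A then - y j else 0)
  = minI y.
Proof.
move=> d_gt0 y_gt0; have [k yk] := minI_attained y d_gt0.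
pose G (A : {set 'I_d}) := minI (fun j => if j \in A then - y j else 0).
have G0 : G finset.set0 = 0.
  by apply: minI_eq => // [j|]; [rewrite inE | exists k; rewrite inE].
have Gk : G [set k]%SET = - y k.
  apply: minI_eq => // [j|]; last by exists k; rewrite inE eqxx.
  by rewrite inE; case: eqP => [->|_]; rewrite // oppr_le0 ltW.
have GkA A : A != finset.set0 -> G (k |: A) = G A.
  case/finset.set0Pn => i iA; apply: minI_eq => // [j|].
    rewrite finset.in_setU1; case: eqP => [->|_] /=; last exact: minI_le.
    apply: le_trans (minI_le _ i) _; rewrite iA lerN2 -yk; exact: minI_le.
  have [j Gj] := minI_attained (fun j => if j \in A then - y j else 0) d_gt0.
  exists j; rewrite /G Gj finset.in_setU1; case: eqP => [jk|] //=; subst j.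
  suff kA : k \in A by rewrite kA.
  move: (minI_le (fun j => if j \in A then - y j else 0) i); rewrite Gj iA.
  by case: (k \in A) => //; rewrite oppr_ge0 leNgt y_gt0.
rewrite (sum_sign_split _ k) (bigD1 finset.set0) ?finset.sub0set //=.
rewrite big1 => [|A /andP[_ A0]]; last by rewrite -/(G A) -/(G (k |: A)) GkA ?subrr ?mulr0.
rewrite cards0 expr0 mul1r -/(G finset.set0) finset.setU0 -/(G [set k]%SET).
by rewrite G0 Gk sub0r opprK addr0.
Qed.

End signed_subset_sums_on_ordinals.

Section finite_quantifiers.
Context {dT : measure_display} {T : measurableType dT} {I : finType}.
Implicit Types Q : I -> set T.

Lemma measurable_forall_in Q (A : {set I}) :
  (forall i, measurable (Q i)) -> measurable [set w | forall i, i \in A -> Q i w].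
Proof.
move=> mQ; rewrite (_ : [set w | _] = \bigcap_(i in [set i | i \in A]) Q i).
  by apply: fin_bigcap_measurable => //; exact: finite_finset.
by apply/seteqP; split => w /= Qw i; apply: Qw.
Qed.

Lemma measurable_forall Q :
  (forall i, measurable (Q i)) -> measurable [set w | forall i, Q i w].
Proof.
move=> mQ; rewrite (_ : [set w | _] = \bigcap_(i in setT) Q i).
  by apply: fin_bigcap_measurable => //; exact: finite_finset.
by apply/seteqP; split => w /= Qw i //; apply: Qw.
Qed.

Lemma negligible_exists {R : realType} (mu : {measure set T -> \bar R}) Q :
  (forall i, mu.-negligible (Q i)) -> mu.-negligible [set w | exists i, Q i w].
Proof.
move=> Q0; apply: (@negligibleS _ _ _ _ (\big[setU/set0]_i Q i)).
  by move=> w [i Qiw]; rewrite (bigD1 i) //=; left.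
by elim/big_ind: _ => //; [exact: negligible_set0 | exact: negligibleU].
Qed.

End finite_quantifiers.

Section inclusion_exclusion.
Context {dT : measure_display} {T : measurableType dT} {R : realType}.
Variables (mu : {finite_measure set T -> \bar R}) (I : finType) (B : I -> set T).
Hypothesis mB : forall i, measurable (B i).

Lemma inclusion_exclusion_fine (E : set T) (S : {set I}) : measurable E ->
  fine (mu (E `&` [set w | forall i, i \in S -> ~ B i w])) =
  \sum_(A : {set I} | A \subset S)
    (-1) ^+ #|A| * fine (mu (E `&` [set w | forall i, i \in A -> B i w])).
Proof.
move Sn : #|S| => n; elim: n E S Sn => [|n IH] E S Sn mE.
  rewrite (finset.cards0_eq Sn) (eq_bigl (pred1 finset.set0)); last first.
    by move=> A; rewrite finset.subset0.
  rewrite big_pred1_eq finset.cards0 expr0 mul1r.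
  by congr (fine (mu (E `&` _))); apply/seteqP; split => w /= ? i; rewrite inE.
have [k kS] : exists k, k \in S.
  by apply/finset.set0Pn; apply: contra_eqN Sn => /eqP ->; rewrite finset.cards0.
have Sn' : #|S :\ k| = n by move: Sn; rewrite (finset.cardsD1 k) kS => -[].
pose avoid (F : set T) (S' : {set I}) := F `&` [set w | forall i, i \in S' -> ~ B i w].
have mavoid (F : set T) (S' : {set I}) : measurable F -> measurable (avoid F S').
  move=> mF; apply: measurableI => //; apply: measurable_forall_in => i.
  exact: measurableC.
have avoidS : avoid E S = avoid E (S :\ k) `\` B k.
  apply/seteqP; split => w /=.
    move=> [Ew Sw]; split; last exact: Sw.
    by split => // i /finset.setD1P[_]; exact: Sw.
  move=> [[Ew Sw] Bkw]; split => // i iS; have [->|ik] := eqVneq i k => //.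
  by apply: Sw; rewrite finset.in_setD1 ik.
have split_k : fine (mu (avoid E S)) =
    fine (mu (avoid E (S :\ k))) - fine (mu (avoid (E `&` B k) (S :\ k))).
  have mEk : measurable (avoid E (S :\ k)) by exact: mavoid.
  have mEkB : measurable (avoid E (S :\ k) `&` B k) by exact: measurableI.
  rewrite avoidS measureD //; last by rewrite ltey_eq fin_num_measure.
  by rewrite fineB ?fin_num_measure // /avoid setIAC.
rewrite -/(avoid E S) split_k !IH //; last exact: measurableI.
rewrite (sum_subsets_sign_split _ kS) -sumrB; apply: eq_bigr => A.
rewrite finset.subsetD1 => /andP[_ kA]; rewrite mulrBr; congr (_ - _ * fine (mu _)).
rewrite -setIA; congr (E `&` _); apply/seteqP; split => w /=.
  by move=> [Bkw Aw] i; rewrite finset.in_setU1 => /orP[/eqP -> //|]; exact: Aw.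
by move=> Aw; split => [|i iA]; apply: Aw; rewrite finset.in_setU1 ?eqxx ?iA ?orbT.
Qed.

End inclusion_exclusion.

Section survival_copula.
Context {R : realType} {d : nat} {dT : measure_display} {T : measurableType dT}.
Variables (P : probability T R) (U : 'I_d -> T -> R) (C : ('I_d -> R) -> R).
Hypothesis UC : has_cdf P U C.
Hypothesis C_margin :
  forall j v, 0 <= v <= 1 -> C (fun k => if k == j then v else 1) = v.
Hypothesis d_gt0 : (0 < d)%N.

Let measurable_preimage_U j (Y : set R) : measurable Y -> measurable (U j @^-1` Y).
Proof. by move=> mY; rewrite -[_ @^-1` _]setTI; exact: UC.1. Qed.

Let measurable_U_le j c : measurable [set w | U j w <= c].
Proof.
rewrite (_ : [set w | _] = U j @^-1` `]-oo, c]); last first.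
  by apply/seteqP; split => w /=; rewrite in_itv.
by apply: measurable_preimage_U; exact: measurable_itv.
Qed.

Let measurable_U_ge j c : measurable [set w | c <= U j w].
Proof.
rewrite (_ : [set w | _] = U j @^-1` `[c, +oo[); last first.
  by apply/seteqP; split => w /=; rewrite in_itv /= andbT.
by apply: measurable_preimage_U; exact: measurable_itv.
Qed.

Let measurable_U_eq j c : measurable [set w | U j w = c].
Proof.
rewrite (_ : [set w | _] = U j @^-1` [set c]) //.
by apply: measurable_preimage_U; exact: measurable_set1.
Qed.

Let cube := [set w | forall j, U j w <= 1].

Let measurable_cube : measurable cube.
Proof. by apply: measurable_forall => j; exact: measurable_U_le. Qed.

Lemma negligible_outside_cube : P.-negligible (~` cube).
Proof.
have P_outside : P (~` cube) = 0%E.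
  rewrite probability_setC // UC.2 => [|j]; last by rewrite ler01 lexx.
  have -> : C (fun=> 1) = C (fun k => if k == Ordinal d_gt0 then 1 else 1).
    by congr C; apply/funext => k; case: ifP.
  by rewrite C_margin ?ler01 ?lexx // subee.
by apply/negligibleP => //; exact: measurableC.
Qed.

Lemma negligible_level j c : 0 < c <= 1 -> P.-negligible [set w | U j w = c].
Proof.
move=> /andP[c_gt0 c_le1].
pose below v := [set w | forall k, U k w <= if k == j then v else 1].
have mbelow v : measurable (below v).
  by apply: measurable_forall => k; exact: measurable_U_le.
(* Stated for the content underlying [P], the form in which [measureD] returns it. *)
have Pbelow v : 0 <= v <= 1 -> (P : {content set T -> \bar R}) (below v) = v%:E.
  move=> v01; rewrite -{2}(C_margin j v01); apply: UC.2 => k.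
  by case: (k == j); rewrite // ler01 lexx.
pose Z := cube `&` [set w | U j w = c].
have mZ : measurable Z.
  by apply: measurableI; [exact: measurable_cube | exact: measurable_U_eq].
have PZ_le e : 0 < e <= c -> (P Z <= e%:E)%E.
  move=> /andP[e_gt0 e_le_c].
  have Z_sub : Z `<=` below c `\` below (c - e).
    move=> w [cube_w Ujw]; split => [k|/(_ j)]; last by rewrite eqxx Ujw; lra.
    by case: eqP => [->|_]; rewrite ?Ujw ?cube_w.
  have mD : measurable (below c `\` below (c - e)) by exact: measurableD.
  apply: le_trans (le_measure _ (mem_set mZ) (mem_set mD) Z_sub) _.
  have below_mono : below (c - e) `<=` below c.
    by move=> w below_w k; have := below_w k; case: (k == j) => //; lra.
  have [c01 ce01] : 0 <= c <= 1 /\ 0 <= c - e <= 1.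
    by split; apply/andP; split; lra.
  rewrite measureD //; last by rewrite ltey_eq fin_num_measure.
  by rewrite setIidr // !Pbelow // -EFinB lee_fin; lra.
have PZ0 : P Z = 0%E.
  apply/eqP; rewrite -measure_le0; apply/lee_addgt0Pr => e e_gt0.
  have ec : 0 < Num.min e c <= c by rewrite lt_min e_gt0 c_gt0 ge_min lexx orbT.
  by rewrite add0e (le_trans (PZ_le _ ec)) // lee_fin ge_min lexx.
apply: (@negligibleS _ _ _ _ (~` cube `|` Z)).
  by move=> w Ujw; have [cube_w|] := pselect (cube w); [right | left].
by apply: negligibleU; [exact: negligible_outside_cube | exact/negligibleP].
Qed.

Lemma survival_cdf_cube_gt u : (forall j, 0 <= u j < 1) ->
  survival_cdf P U u =
  fine (P (cube `&` [set w | forall j, j \in [set: 'I_d]%SET -> ~ U j w <= 1 - u j])).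
Proof.
move=> u01; pose Y := cube `&` [set w | forall j, j \in [set: 'I_d]%SET -> ~ U j w <= 1 - u j].
have mY : measurable Y.
  apply: measurableI => //; apply: measurable_forall_in => j.
  exact/measurableC/measurable_U_le.
have [N [mN PN0 N_sub]] : P.-negligible (~` cube `|` [set w | exists j, U j w = 1 - u j]).
  apply: negligibleU; first exact: negligible_outside_cube.
  apply: negligible_exists => j; apply: negligible_level.
  by have /andP[? ?] := u01 j; apply/andP; split; lra.
have mX : measurable [set w | forall j, 1 - u j <= U j w].
  by apply: measurable_forall => j; exact: measurable_U_ge.
rewrite /survival_cdf -/Y (_ : [set w | _] = [set w | forall j, 1 - u j <= U j w]); last first.
  by apply/seteqP; split => w /= Uw j; have := Uw j; lra.
congr fine; apply/le_anti/andP; split; last first.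
  apply: le_measure; rewrite ?inE // => w [_ Yw] j.
  by have := Yw j (finset.in_setT j); lra.
have PYN : P (Y `|` N) = P Y by exact: measureU0.
rewrite -PYN; apply: le_measure; rewrite ?inE //; first exact: measurableU.
move=> w Uw; have [cube_w|] := pselect (cube w); last by right; apply: N_sub; left.
have [[j Uj]|no_tie] := pselect (exists j, U j w = 1 - u j).
  by right; apply: N_sub; right; exists j.
left; split => // j _; have := Uw j; rewrite le_eqVlt => /orP[/eqP tie|].
  by exfalso; apply: no_tie; exists j.
by rewrite ltNge => /negP.
Qed.

Lemma survival_cdf_inclusion_exclusion u : (forall j, 0 <= u j < 1) ->
  survival_cdf P U u =
  \sum_(A : {set 'I_d}) (-1) ^+ #|A| * C (fun j => if j \in A then 1 - u j else 1).
Proof.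
move=> u01; rewrite survival_cdf_cube_gt // inclusion_exclusion_fine // => [|j].
  2: exact: measurable_U_le.
rewrite (eq_bigl xpredT) => [|A]; last by rewrite finset.subsetT.
apply: eq_bigr => A _; congr (_ * _).
pose uA j := if j \in A then 1 - u j else 1.
have uA01 j : 0 <= uA j <= 1.
  by rewrite /uA; case: ifP => _; [have := u01 j; lra | rewrite ler01 lexx].
rewrite (_ : _ `&` _ = [set w | forall j, U j w <= uA j]).
  exact: (congr1 fine (UC.2 uA uA01)).
apply/seteqP; split => w /=.
  by move=> [cube_w Aw] j; rewrite /uA; case: ifP => [/Aw|_]; [|exact: cube_w].
move=> Aw; split => [j|j jA]; have := Aw j; rewrite /uA; last by rewrite jA.
by case: ifP => // _ Uj; have := u01 j; lra.
Qed.

End survival_copula.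

Section right_slope_at_zero.
Variable R : realType.
Implicit Types (f g : R -> R) (a b x : R).

Definition rslope1 f a : Prop := (fun t => (f t - 1) / t) @ (0:R)^'+ --> a.

Lemma rslope1_cvg f a : rslope1 f a -> f @ (0:R)^'+ --> (1 : R).
Proof.
move=> fa; have : (fun t => 1 + t * ((f t - 1) / t)) @ (0:R)^'+ --> 1 + 0 * a.
  by apply: cvgD; [exact: cvg_cst | apply: cvgM => //; exact: cvg_at_right_filter].
rewrite mul0r addr0; apply: cvg_trans; apply: near_eq_cvg; near=> t.
have t_gt0 : 0 < t by near: t; exact: nbhs_right_gt.
by rewrite mulrCA divff ?gt_eqF // mulr1 addrC subrK.
Unshelve. all: by end_near.
Qed.

Lemma rslope1M f g a b : rslope1 f a -> rslope1 g b -> rslope1 (f \* g) (a + b).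
Proof.
move=> fa gb; rewrite /rslope1 (_ : (fun t => _) =
  (fun t => (f t - 1) / t * g t + (g t - 1) / t)); last first.
  by apply/funext => t /=; rewrite mulrAC -mulrDl [in RHS]mulrBl mul1r addrA subrK.
by rewrite -[a]mulr1; apply: cvgD => //; apply: cvgM => //; exact: rslope1_cvg gb.
Qed.

Lemma rslope1_prod (I : Type) (r : seq I) (F : I -> R -> R) (a : I -> R) :
  (forall i, rslope1 (F i) (a i)) ->
  rslope1 (fun t => \prod_(i <- r) F i t) (\sum_(i <- r) a i).
Proof.
move=> Fa; elim: r => [|i r IH].
  by rewrite /rslope1 big_nil; under eq_fun do rewrite big_nil subrr mul0r; exact: cvg_cst.
by rewrite big_cons; under eq_fun do rewrite big_cons; exact: rslope1M.
Qed.

Lemma cvg_at_right_dnbhs f x (l : R) : f @ x^' --> l -> f @ x^'+ --> l.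
Proof.
move=> fl A /fl; rewrite !near_simpl !near_withinE; apply: filterS => t xt_neq x_lt_t.
by apply: xt_neq; rewrite gt_eqF.
Qed.

Lemma rslope1_powR x b : rslope1 (fun t => (1 - t * x) `^ b) (- (b * x)).
Proof.
pose F := (@powR R)^~ b \o (fun t => 1 - t * x).
have dF : is_derive (0:R) 1 F (b * - x).
  have -> : b * - x = b * (1 - 0 * x) `^ (b - 1) * - x.
    by rewrite mul0r subr0 powR1 mulr1.
  apply: is_derive1_comp; first by apply: is_derive1_powR; rewrite mul0r subr0.
  by apply: is_derive_eq; rewrite add0r mul1r scaler0 add0r [_%:A]mulr1.
have : (fun h => h^-1 *: (F (h *: 1 + 0) - F 0)) @ (0:R)^' --> derive F 0 1.
  exact: @ex_derive _ _ _ _ _ _ _ dF.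
rewrite (@derive_val _ _ _ _ _ _ _ dF) mulrN => /cvg_at_right_dnbhs; apply: cvg_trans.
apply: near_eq_cvg; near=> h.
by rewrite /F /= addr0 mul0r subr0 powR1 [h%:A]mulr1; exact: mulrC.
Unshelve. all: by end_near.
Qed.

Lemma cvg_bigmin (I : Type) (r : seq I) (F : I -> R -> R) (x0 : R -> R) (a : I -> R) a0 :
  x0 @ (0:R)^'+ --> a0 -> (forall i, F i @ (0:R)^'+ --> a i) ->
  (fun t => \big[Num.min/x0 t]_(i <- r) F i t) @ (0:R)^'+ -->
  \big[Num.min/a0]_(i <- r) a i.
Proof.
move=> x0a Fa; elim: r => [|i r IH]; first by rewrite big_nil; under eq_fun do rewrite big_nil.
rewrite big_cons minr_absE; under eq_fun do rewrite big_cons minr_absE.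
apply: cvgM; last exact: cvg_cst.
by apply: cvgB; [exact: cvgD | apply: cvg_norm; exact: cvgB].
Qed.

Lemma cvg_minI d (F : 'I_d -> R -> R) (a : 'I_d -> R) : (0 < d)%N ->
  (forall j, F j @ (0:R)^'+ --> a j) ->
  (fun t => minI (fun j => F j t)) @ (0:R)^'+ --> minI a.
Proof. by case: d F a => // n F a _ Fa; rewrite /minI enum_ordSl /=; exact: cvg_bigmin. Qed.

Lemma rslope1_minI d (F : 'I_d -> R -> R) (a : 'I_d -> R) : (0 < d)%N ->
  (forall j, rslope1 (F j) (a j)) -> rslope1 (fun t => minI (fun j => F j t)) (minI a).
Proof.
move=> d_gt0 Fa; apply: cvg_trans (cvg_minI d_gt0 Fa); apply: near_eq_cvg; near=> t.
have t_gt0 : 0 < t by near: t; exact: nbhs_right_gt.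
by rewrite minI_affine.
Unshelve. all: by end_near.
Qed.

Lemma rslope1_sum_sign (I : finType) (G : {set I} -> R -> R)
    (l : {set I} -> R) :
  (0 < #|I|)%N -> (forall A, rslope1 (G A) (l A)) ->
  (fun t => (\sum_(A : {set I}) (-1) ^+ #|A| * G A t) / t) @ (0:R)^'+ -->
  \sum_(A : {set I}) (-1) ^+ #|A| * l A.
Proof.
case/card_gt0P => k _ Gl.
have -> : (fun t => (\sum_(A : {set I}) (-1) ^+ #|A| * G A t) / t) =
    (fun t => \sum_(A : {set I}) (-1) ^+ #|A| * ((G A t - 1) / t)).
  have sign0 : \sum_(A : {set I}) (-1) ^+ #|A| = 0 :> R.
    have := @sum_sign_eq0 R I (fun=> 1) k (fun=> erefl).
    by under eq_bigr do rewrite mulr1.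
  apply/funext => t; under [RHS]eq_bigr do rewrite mulrBl mul1r mulrBr mulrA.
  by rewrite sumrB -!mulr_suml sign0 mul0r subr0.
apply: cvg_big => [|A _]; first exact: add_continuous.
exact: cvgM (cvg_cst _) (Gl A).
Qed.

End right_slope_at_zero.

Section Marshall_Olkin.
Variables (R : realType) (d : nat) (alpha : 'I_d -> R).

Lemma MO_copula_margin j v : (forall k, 0 <= alpha k) -> 0 <= v <= 1 ->
  MO_copula alpha (fun k => if k == j then v else 1) = v.
Proof.
move=> alpha_ge0 /andP[v_ge0 v_le1].
have d_gt0 : (0 < d)%N by apply: leq_ltn_trans (ltn_ord j).
rewrite /MO_copula (bigD1 j) //= eqxx big1 => [|k /negbTE ->]; last by rewrite powR1.
rewrite mulr1 (@minI_eq _ _ _ (v `^ alpha j)) //; last by exists j; rewrite eqxx.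
  by rewrite -powRD ?subrK ?powRr1 // oner_eq0.
move=> k; case: eqP => [->|_]; rewrite // powR1 /=.
have := @ge0_ler_powR R (alpha j) (alpha_ge0 j) v 1.
by rewrite powR1 !nnegrE ler01 => ->.
Qed.

Lemma rslope1_MO_copula (x : 'I_d -> R) (A : {set 'I_d}) : (0 < d)%N ->
  rslope1 (fun t => MO_copula alpha (fun j => if j \in A then 1 - t * x j else 1))
    (\sum_j (if j \in A then - ((1 - alpha j) * x j) else 0) +
     minI (fun j => if j \in A then - (alpha j * x j) else 0)).
Proof.
move=> d_gt0; have slope_j b j : rslope1 (fun t => (if j \in A then 1 - t * x j else 1) `^ b)
    (if j \in A then - (b * x j) else 0).
  case: (j \in A); first exact: rslope1_powR.
  rewrite /rslope1; under eq_fun do rewrite powR1 subrr mul0r; exact: cvg_cst.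
apply: rslope1M; first exact: rslope1_prod.
exact: rslope1_minI.
Qed.

Lemma sum_sign_MO_slope (x : 'I_d -> R) : (1 < d)%N ->
  (forall j, 0 < alpha j) -> (forall j, 0 < x j) ->
  \sum_(A : {set 'I_d}) (-1) ^+ #|A| *
    (\sum_j (if j \in A then - ((1 - alpha j) * x j) else 0) +
     minI (fun j => if j \in A then - (alpha j * x j) else 0))
  = minI (fun j => alpha j * x j).
Proof.
move=> d_gt1 alpha_gt0 x_gt0; have d_gt0 := ltnW d_gt1; under eq_bigr do rewrite mulrDr.
rewrite big_split /= sum_sign_additive_eq0 // add0r sum_sign_minI // => j.
exact: mulr_gt0.
Qed.

End Marshall_Olkin.

Section MO_survival_tail.
Context {R : realType} {d : nat} {dT : measure_display} {T : measurableType dT}.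
Variables (P : probability T R) (U : 'I_d -> T -> R) (alpha : 'I_d -> R).
Hypothesis UC : has_cdf P U (MO_copula alpha).
Hypotheses (d_gt1 : (1 < d)%N) (alpha_gt0 : forall j, 0 < alpha j).

Theorem MO_survival_tail_copula :
  has_tail_copula (survival_cdf P U) (fun x => minI (fun j => alpha j * x j)).
Proof.
have d_gt0 : (0 < d)%N := ltnW d_gt1.
move=> x x_gt0; rewrite -sum_sign_MO_slope //.
have card_gt0 : (0 < #|'I_d|)%N by rewrite card_ord.
have slope A := @rslope1_MO_copula R d alpha x A d_gt0.
apply: cvg_trans _ (rslope1_sum_sign card_gt0 slope).
have e_gt0 : 0 < minI (fun j => (x j)^-1) by apply: minI_gt0 => // j; rewrite invr_gt0.
apply: near_eq_cvg; near=> t.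
have t_gt0 : 0 < t by near: t; exact: nbhs_right_gt.
have t_lt_e : t < minI (fun j => (x j)^-1) by near: t; exact: nbhs_right_lt.
have margin j v : 0 <= v <= 1 -> MO_copula alpha (fun k => if k == j then v else 1) = v.
  by apply: MO_copula_margin => k; exact: ltW.
rewrite (survival_cdf_inclusion_exclusion UC margin d_gt0) // => j.
rewrite mulr_ge0 ?ltW //= -ltr_pdivlMr // div1r.
exact: lt_le_trans t_lt_e (minI_le _ j).
Unshelve. all: by end_near.
Qed.

End MO_survival_tail.

Section geometric_mean.
Variables (R : realType) (d : nat).

Definition geomean (a : 'I_d -> R) : R := \prod_(j < d) a j `^ d%:R^-1.

Variable alpha : 'I_d -> R.
Hypotheses (d_gt0 : (0 < d)%N) (alpha_gt0 : forall j, 0 < alpha j).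

Let g := geomean alpha.

Lemma geomean_gt0 : 0 < g.
Proof. by apply: prodr_gt0 => j _; exact: powR_gt0. Qed.

Lemma geomean_expn : g ^+ d = \prod_(j < d) alpha j.
Proof.
rewrite /g /geomean -prodrXl; apply: eq_bigr => j _.
rewrite -powR_mulrn ?powR_ge0 // -powRrM mulVf ?powRr1 ?ltW // pnatr_eq0.
by rewrite -lt0n.
Qed.

Lemma prod_mulr_Bset (b : 'I_d -> R) : b \in @Bset R d ->
  \prod_(j < d) (alpha j * b j) = g ^+ d.
Proof. by case/set_mem => _ prod_b; rewrite big_split /= prod_b mulr1 geomean_expn. Qed.

Lemma minI_mulr_le_geomean (b : 'I_d -> R) : b \in @Bset R d ->
  minI (fun j => alpha j * b j) <= g.
Proof.
move=> bB; have [b_gt0 _] := set_mem bB.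
have ab_gt0 j : 0 < alpha j * b j by rewrite mulr_gt0.
have m_ge0 := ltW (minI_gt0 d_gt0 ab_gt0).
rewrite -(ler_pXn2r d_gt0) ?nnegrE ?(ltW geomean_gt0) // -(prod_mulr_Bset bB).
by apply: expn_minI_le_prod => // j; rewrite ltW.
Qed.

Lemma geomean_divr_Bset : (fun j => g / alpha j) \in @Bset R d.
Proof.
apply/mem_set; split => [j|]; first by rewrite divr_gt0 ?geomean_gt0.
rewrite big_split /= prodr_const card_ord geomean_expn prodfV divff //.
by apply/prodf_neq0 => j _; rewrite gt_eqF.
Qed.

Lemma minI_mulr_geomean_divr : minI (fun j => alpha j * (g / alpha j)) = g.
Proof.
by apply: minI_eq => // [j|]; [|exists (Ordinal d_gt0)]; rewrite mulrC divfK ?gt_eqF.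
Qed.

Lemma geomean_le_minI_mulr (b : 'I_d -> R) : b \in @Bset R d ->
  g <= minI (fun j => alpha j * b j) -> b = (fun j => g / alpha j).
Proof.
move=> bB g_le; have [b_gt0 _] := set_mem bB.
have ab_gt0 j : 0 < alpha j * b j by rewrite mulr_gt0.
have m_eq : minI (fun j => alpha j * b j) = g.
  by apply/le_anti; rewrite g_le andbT minI_mulr_le_geomean.
have ab_eq j : alpha j * b j = g.
  by rewrite -m_eq; apply: minI_eq_of_prod_le => //; rewrite prod_mulr_Bset // m_eq.
by apply/funext => j; rewrite -(ab_eq j) mulrAC divff ?mul1r ?gt_eqF.
Qed.

End geometric_mean.

Lemma sup_max (R : realType) (S : set R) (x : R) : S x -> ubound S x -> sup S = x.
Proof. by move=> Sx ubx; apply/le_anti; rewrite ge_sup ?ub_le_sup //; exists x. Qed.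

Unset Implicit Arguments.

Theorem proposition3p2 (R : realType) (d : nat) (alpha : 'I_d -> R)
  (dT : measure_display) (T : measurableType dT) (P : probability T R)
  (U : 'I_d -> T -> R) :
  (2 <= d)%N ->
  (forall j, 0 < alpha j < 1) ->
  has_cdf P U (MO_copula alpha) ->
  let Chat := survival_cdf P U in
  let g := \prod_(j < d) (alpha j `^ (d%:R^-1)) in
  let bstar := fun j => g / alpha j in
  [/\ has_tail_copula Chat (fun x => minI (fun j => alpha j * x j)),
      lambda_star Chat = g,
      bstar \in (@Bset R d) &
      forall b, b \in (@Bset R d) ->
        ((forall b', b' \in (@Bset R d) -> tail_copula Chat b' <= tail_copula Chat b)
         <-> b = bstar)].
Proof.
move=> d_gt1 alpha01 UC Chat g bstar.
have d_gt0 : (0 < d)%N := ltnW d_gt1.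
have alpha_gt0 j : 0 < alpha j by case/andP: (alpha01 j).
have tail := MO_survival_tail_copula UC d_gt1 alpha_gt0.
have tailE b : b \in @Bset R d -> tail_copula Chat b = minI (fun j => alpha j * b j).
  by case/set_mem => b_gt0 _; exact/cvg_lim/tail.
have bstarB : bstar \in @Bset R d := geomean_divr_Bset d_gt0 alpha_gt0.
have tail_bstar : tail_copula Chat bstar = g.
  by rewrite tailE // minI_mulr_geomean_divr.
split => //.
- apply: sup_max; first by exists bstar => //; exact/set_mem.
  by move=> _ [b /mem_set bB <-]; rewrite tailE // minI_mulr_le_geomean.
- move=> b bB; split => [bmax|->]; last first.
    by move=> b' b'B; rewrite tail_bstar tailE // minI_mulr_le_geomean.
  apply: geomean_le_minI_mulr => //.
  by rewrite -[geomean _]/g -tailE // -tail_bstar; exact: bmax.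
Qed.
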